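(* For all non-negative integers $\beta$ and $k$, let $$X := \{(\alpha, l) \in \mathbb{Z}^2 : 0 \leq \alpha \leq \beta,\ 0 \leq l \leq k,\ (\alpha,l) \neq (\beta, k),\ (q-1) \mid (\beta + k -(\alpha + l)) \}.$$ Then $z(\chi_t^0, x, 0) = 1$, and $$z(\chi_t^\beta,x,-k) = 1 - x^{-1} \sum_{(\alpha,l) \in X}{\beta \choose \alpha}{k \choose l}t^\alpha \theta^l\, z(\chi_t^\alpha, x, -l).$$
   Context: Let $q$ be a power of a prime $p$, $A=\mathbb{F}_q[\theta]$ with $\theta$ an indeterminate, and for $d\ge 0$ let $A_+(d)$ be the set of monic polynomials in $A$ of degree $d$. Let $t$ be an indeterminate and $\chi_t:A\to\mathbb{F}_q[t]$ the $\mathbb{F}_q$-algebra morphism sending $\theta$ to $t$ (so $\chi_t(a)=a(t)$); $\chi_t(a)^0:=1$. For non-negative integers $\beta,k,d$ put $S_d(\chi_t^\beta,k):=\sum_{a\in A_+(d)}\chi_t(a)^\beta a^k\in A[t]$, and define the special series $z(\chi_t^\beta,x,-k):=\sum_{d\ge 0}x^{-d}S_d(\chi_t^\beta,k)\in A[t][[x^{-1}]]$. *)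

From HB Require Import structures.
From mathcomp Require Import all_boot all_order all_algebra all_field.
Set Implicit Arguments. Unset Strict Implicit. Unset Printing Implicit Defensive.
Import Order.TTheory GRing.Theory.
Local Open Scope ring_scope.

Section Defs.
Variable F : finFieldType.

(* A = F[theta] is {poly F}; A[t] is {poly {poly F}} with outer variable t = 'X
   and theta embedded as the constant polynomial ('X)%:P. *)
Definition Apoly := {poly F}.
Definition At := {poly {poly F}}.

Definition thetaAt : At := ('X : {poly F})%:P.
Definition tAt : At := 'X.

Definition monic_of (d : nat) (c : {ffun 'I_d -> F}) : {poly F} :=
  'X^d + \poly_(i < d) (if insub i is Some j then c j else 0).

Definition Aplus (d : nat) : seq {poly F} :=
  [seq monic_of c | c <- enum {ffun 'I_d -> F}].

Definition chi_t (a : {poly F}) : At := map_poly (fun c : F => c%:P) a.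

Definition S (d beta k : nat) : At :=
  \sum_(a <- Aplus d) chi_t a ^+ beta * (a%:P) ^+ k.

(* formal series in x^{-1} over A[t], represented by coefficient sequences:
   f represents sum_d f d * x^{-d} *)
Definition z (beta k : nat) : nat -> At := fun d => S d beta k.

Definition ps_one : nat -> At := fun d => (d == 0%N)%:R.
Definition ps_xinv (f : nat -> At) : nat -> At :=
  fun d => if d is d'.+1 then f d' else 0.
Definition ps_sub (f g : nat -> At) : nat -> At := fun d => f d - g d.

Definition Xsum (beta k : nat) : nat -> At := fun d =>
  \sum_(alpha < beta.+1) \sum_(l < k.+1 |
      ((alpha : nat, l : nat) != (beta, k)) &&
      ((#|F| - 1)%N %| (beta + k - (alpha + l)))%N)
    ('C(beta, alpha) * 'C(k, l))%:R * tAt ^+ alpha * thetaAt ^+ l * z alpha l d.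

End Defs.

(* Every monic polynomial of degree d+1 is uniquely b θ + x with b monic of degree d and
   x ∈ F_q.  Expanding (χ_t(b) t + x)^β (b θ + x)^k binomially and summing over x, only the
   power sums Σ_x x^n survive, and these equal -1 when n > 0 and (q-1) | n, and 0 otherwise.
   Hence S_{d+1}(χ_t^β, k) is minus the d-th coefficient of the sum over X, which is the
   claimed identity; for β = k = 0 the set X is empty. *)
From HB Require Import structures.
From mathcomp Require Import all_boot all_order all_algebra all_field.
From mathcomp Require Import fingroup cyclic abelian ring zify.
From Stdlib Require Import FunctionalExtensionality.
Set Implicit Arguments. Unset Strict Implicit. Unset Printing Implicit Defensive.
Import Order.TTheory GRing.Theory FinRing.Theory.
Local Open Scope ring_scope.

Section FinFieldPowerSums.
Variable F : finFieldType.

Lemma natr_card_finField : #|F|%:R = 0 :> F.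
Proof. by rewrite -[LHS]zmodXgE -cardsT expg_cardG ?inE. Qed.

Lemma natr_card_pred : #|F|.-1%:R = -1 :> F.
Proof.
apply/eqP; rewrite -subr_eq0 opprK natr1 (ltn_predK (finNzRing_gt1 F)).
exact/eqP/natr_card_finField.
Qed.

Lemma expf_card_pred (x : F) : x != 0 -> x ^+ #|F|.-1 = 1.
Proof.
move=> x0; apply: (mulIf x0).
by rewrite mul1r -exprSr (ltn_predK (finNzRing_gt1 F)) expf_card.
Qed.

Lemma card_pred_dvdn_exp (n : nat) :
  (forall x : F, x != 0 -> x ^+ n = 1) -> (#|F|.-1 %| n)%N.
Proof.
move=> xn1; rewrite -card_finField_unit -exponent_cyclic ?field_unit_group_cyclic //.
apply/exponentP => u _; apply: val_inj.
by rewrite val_unitX val_unit1 xn1 // -unitfE (valP u).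
Qed.

Lemma sum_expf_finField (n : nat) : \sum_(x : F) x ^+ n =
  if (0 < n)%N && (#|F|.-1 %| n)%N then -1 else 0.
Proof.
case: n => [|n] /=.
  by rewrite (eq_bigr (fun=> 1)) // sumr_const natr_card_finField.
case: ifP => [dvd_n | ndvd_n].
  rewrite (bigD1 0) //= expr0n add0r (eq_bigr (fun=> 1)); last first.
    by move=> x x0; case/dvdnP: dvd_n => m ->; rewrite mulnC exprM expf_card_pred ?expr1n.
  by rewrite sumr_const cardC1 natr_card_pred.
have [g g0 gn1] : exists2 g : F, g != 0 & g ^+ n.+1 != 1.
  apply/exists_inP; apply: contraFT ndvd_n => /exists_inPn gn1.
  by apply: card_pred_dvdn_exp => x x0; apply/eqP; rewrite (negbNE (gn1 x _)).
set s := \sum_(x : F) x ^+ n.+1.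
have s_invariant : s = g ^+ n.+1 * s.
  rewrite {1}/s (reindex_inj (mulfI g0)) mulr_sumr.
  by apply: eq_bigr => x _; rewrite exprMn.
apply/eqP; move/eqP: s_invariant; rewrite -subr_eq0 -{1}[s]mul1r -mulrBl.
by rewrite mulf_eq0 subr_eq0 eq_sym (negbTE gn1).
Qed.

End FinFieldPowerSums.

Lemma sum_shifted_powers (F : finFieldType) (R : comPzRingType)
    (f : {rmorphism F -> R}) (U V : R) (beta k : nat) :
  \sum_(x : F) (f x + U) ^+ beta * (f x + V) ^+ k =
  - \sum_(alpha < beta.+1) \sum_(l < k.+1 |
      ((alpha : nat, l : nat) != (beta, k)) &&
      ((#|F| - 1)%N %| (beta + k - (alpha + l)))%N)
    ('C(beta, alpha) * 'C(k, l))%:R * U ^+ alpha * V ^+ l.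
Proof.
under eq_bigr => x _ do rewrite !exprDn big_distrlr /=.
rewrite exchange_big -sumrN; apply: eq_bigr => alpha _.
rewrite exchange_big -sumrN [RHS]big_mkcond; apply: eq_bigr => l _ /=.
have -> : \sum_(x : F) (f x ^+ (beta - alpha) * U ^+ alpha *+ 'C(beta, alpha) *
      (f x ^+ (k - l) * V ^+ l *+ 'C(k, l))) =
    ('C(beta, alpha) * 'C(k, l))%:R * U ^+ alpha * V ^+ l *
      f (\sum_(x : F) x ^+ (beta - alpha + (k - l))).
  rewrite rmorph_sum mulr_sumr; apply: eq_bigr => x _.
  by rewrite rmorphXn exprD natrM; ring.
have le_alpha : (alpha <= beta)%N := ltn_ord alpha.
have le_l : (l <= k)%N := ltn_ord l.
rewrite sum_expf_finField subn1.
have -> : (beta + k - (alpha + l))%N = (beta - alpha + (k - l))%N by lia.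
have -> : (0 < beta - alpha + (k - l))%N = ((alpha : nat, l : nat) != (beta, k)).
  by rewrite xpair_eqE; case: eqP => ?; case: eqP => ? /=; lia.
by case: ifP => _; rewrite ?rmorphN1 ?rmorph0 ?mulr0 ?mulrN1.
Qed.

Section FfunCons.
Variable T : Type.

Definition ffun_cons (d : nat) (p : T * {ffun 'I_d -> T}) : {ffun 'I_d.+1 -> T} :=
  [ffun i => if unlift ord0 i is Some j then p.2 j else p.1].

Definition ffun_uncons (d : nat) (c : {ffun 'I_d.+1 -> T}) : T * {ffun 'I_d -> T} :=
  (c ord0, [ffun j => c (lift ord0 j)]).

Lemma ffun_consK d : cancel (@ffun_cons d) (@ffun_uncons d).
Proof.
case=> x c; rewrite /ffun_uncons /ffun_cons ffunE unlift_none; congr (_, _).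
by apply/ffunP => j; rewrite !ffunE liftK.
Qed.

Lemma ffun_unconsK d : cancel (@ffun_uncons d) (@ffun_cons d).
Proof.
move=> c; apply/ffunP => i; rewrite /ffun_cons /ffun_uncons ffunE.
by case: unliftP => [j ->|->] /=; rewrite ?ffunE.
Qed.

Lemma ffun_cons0 d x (c : {ffun 'I_d -> T}) : ffun_cons (x, c) ord0 = x.
Proof. by rewrite ffunE unlift_none. Qed.

Lemma ffun_cons_lift d x (c : {ffun 'I_d -> T}) j : ffun_cons (x, c) (lift ord0 j) = c j.
Proof. by rewrite ffunE liftK. Qed.

End FfunCons.

Section MonicPolynomials.
Variable F : finFieldType.

Lemma coef_monic_of d (c : {ffun 'I_d -> F}) i :
  (monic_of c)`_i = (i == d)%:R + (if insub i is Some j then c j else 0).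
Proof.
rewrite /monic_of coefD coefXn coef_poly.
by case: insubP => [j -> | /negbTE ->].
Qed.

Lemma monic_of_ffun_cons d x (c : {ffun 'I_d -> F}) :
  monic_of (ffun_cons (x, c)) = monic_of c * 'X + x%:P.
Proof.
apply/polyP => i; rewrite coef_monic_of coefD coefMX coefC coef_monic_of.
case: i => [|i] /=.
  case: insubP => [j _ j0|] //; rewrite !add0r.
  by rewrite (_ : j = ord0) ?ffun_cons0 //; apply: ord_inj.
rewrite eqSS addr0; congr (_ + _).
case: insubP => [j lt_i1 vj|]; case: insubP => [j' lt_i vj'|] //=.
- rewrite (_ : j = lift ord0 j') ?ffun_cons_lift //.
  by apply: ord_inj; rewrite lift0 vj vj'.
- by rewrite -ltnS lt_i1.
- by rewrite ltnS lt_i.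
Qed.

Lemma big_Aplus_succ d (R : nmodType) (f : {poly F} -> R) :
  \sum_(a <- Aplus F d.+1) f a = \sum_(b <- Aplus F d) \sum_(x : F) f (b * 'X + x%:P).
Proof.
rewrite /Aplus !big_map -!enumT !big_enum /=.
rewrite (reindex (@ffun_cons F d)) /=; last first.
  exact/onW_bij/(Bijective (@ffun_consK F d) (@ffun_unconsK F d)).
rewrite exchange_big pair_big /=.
by apply: eq_big => [[x c]|[x c] _] //=; rewrite monic_of_ffun_cons.
Qed.

Lemma monic_of0 (c : {ffun 'I_0 -> F}) : monic_of c = 1.
Proof.
by apply/polyP => i; rewrite coef_monic_of coef1; case: insubP => [[]|]; rewrite ?addr0.
Qed.

End MonicPolynomials.

Section PowerSumRecursion.
Variables (F : finFieldType) (beta k : nat).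

Lemma S_0 : S F 0 beta k = 1.
Proof.
rewrite /S /Aplus big_map big_enum /= (eq_bigr (fun=> 1)) => [|c _].
  by rewrite sumr_const card_ffun card_ord.
by rewrite monic_of0 /chi_t rmorph1 !expr1n mulr1.
Qed.

Lemma chi_t_monic_succ (b : {poly F}) (x : F) :
  chi_t (b * 'X + x%:P) = (polyC \o polyC) x + chi_t b * tAt F.
Proof. by rewrite /chi_t rmorphD rmorphM /= map_polyX map_polyC /= addrC. Qed.

Lemma polyC_monic_succ (b : {poly F}) (x : F) :
  (b * 'X + x%:P)%:P = (polyC \o polyC) x + b%:P * thetaAt F :> At F.
Proof. by rewrite polyCD polyCM addrC. Qed.

Lemma S_succ d : S F d.+1 beta k = - Xsum F beta k d.
Proof.
rewrite /S big_Aplus_succ.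
under eq_bigr => b _ do under eq_bigr => x _ do
  rewrite chi_t_monic_succ polyC_monic_succ.
under eq_bigr => b _ do rewrite sum_shifted_powers.
rewrite sumrN /Xsum; congr (- _).
rewrite exchange_big; apply: eq_bigr => alpha _.
rewrite exchange_big; apply: eq_bigr => l _.
rewrite /z /S mulr_sumr; apply: eq_bigr => b _.
by rewrite !exprMn; ring.
Qed.

End PowerSumRecursion.

Lemma Xsum00 (F : finFieldType) d : Xsum F 0 0 d = 0.
Proof. by rewrite /Xsum big_ord1; apply: big_pred0 => -[[]]. Qed.

Lemma z_recursion (F : finFieldType) (beta k : nat) :
  z F beta k = ps_sub (ps_one F) (ps_xinv (Xsum F beta k)).
Proof.
apply: functional_extensionality => -[|d]; rewrite /z /ps_sub /ps_one /ps_xinv /=.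
- by rewrite S_0 subr0.
- by rewrite S_succ sub0r.
Qed.

Theorem proposition2p0p1 (F : finFieldType) (beta k : nat) :
  z F 0 0 = ps_one F /\
  z F beta k = ps_sub (ps_one F) (ps_xinv (Xsum F beta k)).
Proof.
split; last exact: z_recursion.
rewrite z_recursion; apply: functional_extensionality => -[|d].
- exact: subr0.
- by rewrite /ps_sub /ps_xinv Xsum00 subr0.
Qed.
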